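(* Let $n\ge2$ and consider the system \[\dot y=z^2(n+1-y)-ny,\qquad \dot z=\tfrac{n+1}{n}z(n-1+y)-(n+z^2)z.\] Let $D=\{(y,z)\in\mathbb R^2_{>0}:\tfrac{z^2(n+1)}{z^2+n}\le y<1\}$. Then $(0,0)$ is a global attractor of this system on $D$: for every initial condition $(y_0,z_0)\in D$ the solution exists for all $t\ge0$ and $(y(t),z(t))\to(0,0)$ as $t\to\infty$. *)

From Stdlib Require Import Reals.
From Coquelicot Require Import Coquelicot.
Open Scope R_scope.

Definition fy (n : nat) (y z : R) : R :=
  z ^ 2 * (INR n + 1 - y) - INR n * y.
Definition fz (n : nat) (y z : R) : R :=
  (INR n + 1) / INR n * z * (INR n - 1 + y) - (INR n + z ^ 2) * z.

Definition in_D (n : nat) (y z : R) : Prop :=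
  0 < y /\ 0 < z /\ z ^ 2 * (INR n + 1) / (z ^ 2 + INR n) <= y /\ y < 1.

Definition is_solution_on_pos (n : nat) (y z : R -> R) (y0 z0 : R) : Prop :=
  y 0 = y0 /\ z 0 = z0 /\
  filterlim y (at_right 0) (locally y0) /\
  filterlim z (at_right 0) (locally z0) /\
  (forall t, 0 < t -> is_derive y t (fy n (y t) (z t)) /\
                      is_derive z t (fz n (y t) (z t))).

From Stdlib Require Import Reals Lra Lia Psatz.
From Coquelicot Require Import Coquelicot.
Open Scope R_scope.

(* With [margin n y z = y (z^2 + n) - (n + 1) z^2], a point of the open quadrant lies in [D]
   iff [margin >= 0] and [y < 1]; moreover [y' = - margin].  In the unit square the derivative
   of [margin] along the flow is nonnegative where [margin < 0], and [z e^(2t)] is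
   nondecreasing; so a solution from [D] stays where [margin >= 0], [y <= y0] and [z > 0],
   which forces [z^2 <= y < 1].  There [V = y + z^2/3] satisfies [V' <= - c V] with
   [c = (1 - y0)^2 / (3 (n + 1))], and [y], [z] decay exponentially.  For existence, Picard
   iteration solves the system whose field is clamped to the unit square (bounded and globally
   Lipschitz); by the trapping argument that solution never leaves the square, where the
   clamped field is the true one. *)

(** * Monotonicity, real induction and barriers *)

Definition right_continuous (f : R -> R) (a : R) : Prop :=
  forall eps, 0 < eps ->
  exists d, 0 < d /\ forall t, a <= t < a + d -> Rabs (f t - f a) < eps.

Lemma continuous_eps (f : R -> R) (x eps : R) : continuous f x -> 0 < eps ->
  exists d, 0 < d /\ forall t, Rabs (t - x) < d -> Rabs (f t - f x) < eps.
Proof.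
  intros Hc Heps.
  destruct (Hc _ (locally_ball (f x) (mkposreal eps Heps))) as [d Hd].
  exists d; split; [apply cond_pos | intros t Ht; exact (Hd t Ht)].
Qed.

Lemma continuous_right_continuous (f : R -> R) (a : R) :
  continuous f a -> right_continuous f a.
Proof.
  intros Hc eps Heps. destruct (continuous_eps f a eps Hc Heps) as [d [Hd H]].
  exists d; split; [exact Hd|]. intros t Ht. apply H. rewrite Rabs_right; lra.
Qed.

Lemma is_derive_continuous (f : R -> R) (x l : R) : is_derive f x l -> continuous f x.
Proof. intro H. apply (@ex_derive_continuous R_AbsRing R_NormedModule). exists l. exact H. Qed.

Lemma at_right_right_continuous (f : R -> R) (a : R) :
  filterlim f (at_right a) (locally (f a)) -> right_continuous f a.
Proof.
  intros Hc eps Heps.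
  destruct (Hc _ (locally_ball (f a) (mkposreal eps Heps))) as [d Hd].
  exists d; split; [apply cond_pos|]. intros t Ht.
  destruct (Req_dec t a) as [->|Hne].
  - rewrite Rminus_eq_0, Rabs_R0; exact Heps.
  - apply (Hd t); [change (Rabs (t - a) < d); rewrite Rabs_right|]; lra.
Qed.

Lemma continuous_at_right (f : R -> R) (a : R) :
  continuous f a -> filterlim f (at_right a) (locally (f a)).
Proof.
  intros Hc P HP. unfold filtermap, at_right, within.
  apply (filter_imp (fun x => P (f x))); [auto | exact (Hc P HP)].
Qed.

Lemma right_continuous_comp2 (f g : R -> R) (P : R -> R -> R) (a : R) :
  right_continuous f a -> right_continuous g a -> continuity_2d_pt P (f a) (g a) ->
  right_continuous (fun t => P (f t) (g t)) a.
Proof.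
  intros Hf Hg HP eps Heps.
  destruct (HP (mkposreal eps Heps)) as [del Hdel].
  destruct (Hf del (cond_pos del)) as [d1 [Hd1 H1]].
  destruct (Hg del (cond_pos del)) as [d2 [Hd2 H2]].
  exists (Rmin d1 d2); split; [apply Rmin_pos; assumption|].
  pose proof (Rmin_l d1 d2); pose proof (Rmin_r d1 d2).
  intros t Ht. apply Hdel; [apply H1 | apply H2]; lra.
Qed.

Lemma le_of_is_derive_nonneg (f : R -> R) (a b : R) :
  a < b -> right_continuous f a ->
  (forall t, a < t <= b -> exists d, is_derive f t d /\ 0 <= d) -> f a <= f b.
Proof.
  intros Hab Hrc Hd.
  assert (Hinner : forall e, a < e < b -> f e <= f b).
  { intros e He.
    assert (HD : forall x, e <= x <= b -> is_derive f x (Derive f x) /\ 0 <= Derive f x).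
    { intros x Hx. destruct (Hd x) as [d [H1 H2]]; [lra|].
      rewrite (is_derive_unique f x d H1). split; assumption. }
    destruct (MVT_gen f e b (Derive f)) as [c [Hc Heq]];
      rewrite ?Rmin_left, ?Rmax_right in * by lra.
    - intros x Hx. apply HD. lra.
    - intros x Hx. apply continuity_pt_filterlim, (is_derive_continuous f x (Derive f x)).
      apply HD. exact Hx.
    - pose proof (Rmult_le_pos _ (b - e) (proj2 (HD c Hc)) ltac:(lra)). lra. }
  destruct (Rle_lt_dec (f a) (f b)) as [|Hlt]; [assumption|].
  destruct (Hrc (f a - f b)) as [d [Hdp Hd']]; [lra|].
  pose proof (Rmin_pos d (b - a) Hdp ltac:(lra)).
  pose proof (Rmin_l d (b - a)); pose proof (Rmin_r d (b - a)).
  set (e := a + Rmin d (b - a) / 2).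
  pose proof (Hinner e ltac:(unfold e; lra)).
  pose proof (Rabs_def2 _ _ (Hd' e ltac:(unfold e; lra))). lra.
Qed.

Lemma ge_of_is_derive_nonpos (f : R -> R) (a b : R) :
  a < b -> right_continuous f a ->
  (forall t, a < t <= b -> exists d, is_derive f t d /\ d <= 0) -> f b <= f a.
Proof.
  intros Hab Hrc Hd.
  enough (- f a <= - f b) by lra.
  apply (le_of_is_derive_nonneg (fun t => - f t)); [exact Hab| |].
  - intros eps Heps. destruct (Hrc eps Heps) as [d [Hd0 H]].
    exists d; split; [exact Hd0|]. intros t Ht.
    rewrite <- Rabs_Ropp. replace (- (- f t - - f a)) with (f t - f a) by ring. auto.
  - intros t Ht. destruct (Hd t Ht) as [d [H1 H2]].
    exists (- d); split; [exact (is_derive_opp f t d H1) | lra].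
Qed.

Lemma real_induction (Q : R -> Prop) :
  (forall s, 0 <= s -> (forall t, 0 <= t < s -> Q t) -> Q s) ->
  (forall s, 0 <= s -> (forall t, 0 <= t <= s -> Q t) ->
     exists d, 0 < d /\ forall t, s < t < s + d -> Q t) ->
  forall t, 0 <= t -> Q t.
Proof.
  intros Hclosed Hopen t1 Ht1.
  destruct (Classical_Prop.classic (Q t1)) as [|HnQ]; [assumption|]. exfalso.
  set (E := fun s => 0 <= s /\ forall u, 0 <= u <= s -> Q u).
  assert (HQ0 : Q 0) by (apply Hclosed; [lra | intros; lra]).
  assert (HE0 : E 0) by (split; [lra | intros u Hu; replace u with 0 by lra; exact HQ0]).
  assert (Hbound : bound E).
  { exists t1. intros s [Hs Hu]. destruct (Rle_lt_dec s t1) as [|Hlt]; [assumption|].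
    exfalso. apply HnQ, Hu. lra. }
  destruct (completeness E Hbound (ex_intro _ 0 HE0)) as [m [Hub Hlub]].
  pose proof (Hub 0 HE0) as Hm0.
  assert (Hbelow : forall u, 0 <= u < m -> Q u).
  { intros u Hu. destruct (Classical_Prop.classic (Q u)) as [|Hn]; [assumption|]. exfalso.
    enough (m <= u) by lra.
    apply Hlub. intros s [Hs Hs']. destruct (Rle_lt_dec s u) as [|Hlt]; [assumption|].
    exfalso. apply Hn, Hs'. lra. }
  assert (Hupto : forall u, 0 <= u <= m -> Q u).
  { intros u Hu. destruct (Req_dec u m) as [->|]; [apply Hclosed|apply Hbelow]; auto; lra. }
  destruct (Hopen m Hm0 Hupto) as [d [Hd Hd']].
  enough (HE : E (m + d / 2)) by (pose proof (Hub _ HE); lra).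
  split; [lra|]. intros u Hu.
  destruct (Rle_lt_dec u m); [apply Hupto | apply Hd']; lra.
Qed.

Lemma nonneg_of_continuous (phi : R -> R) (a s : R) :
  a < s -> continuous phi s -> (forall t, a <= t < s -> 0 <= phi t) -> 0 <= phi s.
Proof.
  intros Has Hc Hb.
  destruct (Rle_lt_dec 0 (phi s)) as [|Hlt]; [assumption|]. exfalso.
  destruct (continuous_eps phi s (- phi s) Hc) as [e [He H]]; [lra|].
  pose proof (Rmin_pos e (s - a) He ltac:(lra)).
  pose proof (Rmin_l e (s - a)); pose proof (Rmin_r e (s - a)).
  set (t := s - Rmin e (s - a) / 2).
  pose proof (Hb t ltac:(unfold t; lra)).
  pose proof (Rabs_def2 _ _ (H t ltac:(unfold t; rewrite Rabs_left; lra))). lra.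
Qed.

(* Run backwards from [b]: since [phi] is nondecreasing wherever it is negative,
   negativity would spread down to [a]. *)
Lemma nonneg_barrier (phi : R -> R) (a b : R) :
  a < b -> 0 <= phi a -> right_continuous phi a ->
  (forall t, a < t <= b -> exists d, is_derive phi t d /\ (phi t < 0 -> 0 <= d)) ->
  0 <= phi b.
Proof.
  intros Hab Ha Hrc Hd.
  destruct (Rle_lt_dec 0 (phi b)) as [|Hb]; [assumption|]. exfalso.
  assert (Hcont : forall t, a < t <= b -> continuous phi t).
  { intros t Ht. destruct (Hd t Ht) as [d [H _]]. exact (is_derive_continuous _ _ _ H). }
  enough (Hneg : forall u, 0 <= u -> u <= b - a -> phi (b - u) < 0).
  { pose proof (Hneg (b - a) ltac:(lra) ltac:(lra)) as Hna.
    replace (b - (b - a)) with a in Hna by ring. lra. }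
  apply (real_induction (fun u => u <= b - a -> phi (b - u) < 0)).
  - intros s Hs Hbefore Hsba.
    destruct (Req_dec s 0) as [->|Hs0]; [rewrite Rminus_0_r; exact Hb|].
    apply (Rle_lt_trans _ (phi b)); [|exact Hb].
    apply le_of_is_derive_nonneg; [lra| |].
    + destruct (Req_dec (b - s) a) as [->|]; [exact Hrc|].
      apply continuous_right_continuous, Hcont. lra.
    + intros t Ht. destruct (Hd t ltac:(lra)) as [d [H1 H2]].
      exists d; split; [exact H1|]. apply H2.
      replace t with (b - (b - t)) by ring. apply Hbefore; lra.
  - intros s Hs Hupto.
    destruct (Rlt_le_dec s (b - a)) as [Hsba|Hsba];
      [|exists 1; split; [lra | intros; lra]].
    pose proof (Hupto s ltac:(lra) ltac:(lra)) as Hphi.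
    destruct (continuous_eps phi (b - s) (- phi (b - s)) (Hcont (b - s) ltac:(lra)) ltac:(lra))
      as [d [Hd0 H]].
    exists d; split; [exact Hd0|]. intros t Ht _.
    pose proof (Rabs_def2 _ _ (H (b - t) ltac:(rewrite Rabs_left; lra))). lra.
Qed.

(** * Picard iteration for bounded Lipschitz planar vector fields *)

Definition lipschitz (f : R -> R) (K : R) : Prop :=
  forall s t, Rabs (f t - f s) <= K * Rabs (t - s).

Definition lipschitz2 (F : R -> R -> R) (L : R) : Prop :=
  forall u v u' v', Rabs (F u v - F u' v') <= L * (Rabs (u - u') + Rabs (v - v')).

Lemma lipschitz_continuous (f : R -> R) (K x : R) : lipschitz f K -> continuous f x.
Proof.
  intros Hf P [eps HP].
  assert (HK : 0 < Rabs K + 1) by (pose proof (Rabs_pos K); lra).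
  exists (mkposreal _ (Rdiv_lt_0_compat _ _ (cond_pos eps) HK)).
  intros u Hu. apply HP. change (Rabs (u - x) < eps / (Rabs K + 1)) in Hu.
  change (Rabs (f u - f x) < eps).
  apply (Rle_lt_trans _ ((Rabs K + 1) * Rabs (u - x))).
  - eapply Rle_trans; [apply Hf|]. apply Rmult_le_compat_r; [apply Rabs_pos|].
    pose proof (Rle_abs K). lra.
  - apply (Rmult_lt_compat_l (Rabs K + 1)) in Hu; [|exact HK].
    replace ((Rabs K + 1) * (eps / (Rabs K + 1))) with (pos eps) in Hu by (field; lra).
    exact Hu.
Qed.

Lemma lipschitz_ex_RInt (f : R -> R) (K a b : R) : lipschitz f K -> ex_RInt f a b.
Proof.
  intros Hf. apply (@ex_RInt_continuous R_CompleteNormedModule).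
  intros x _. exact (lipschitz_continuous f K x Hf).
Qed.

Lemma lipschitz2_comp (F : R -> R -> R) (L K : R) (p q : R -> R) :
  lipschitz2 F L -> 0 <= L -> lipschitz p K -> lipschitz q K ->
  lipschitz (fun s => F (p s) (q s)) (2 * L * K).
Proof.
  intros HF HL Hp Hq s t. eapply Rle_trans; [apply HF|].
  pose proof (Rmult_le_compat_l L _ _ HL (Hp s t)).
  pose proof (Rmult_le_compat_l L _ _ HL (Hq s t)). lra.
Qed.

Lemma lipschitz_primitive (g : R -> R) (K M c : R) :
  lipschitz g K -> (forall u, Rabs (g u) <= M) -> lipschitz (fun t => c + RInt g 0 t) M.
Proof.
  intros Hg HM s t.
  replace (c + RInt g 0 t - (c + RInt g 0 s)) with (RInt g s t).
  - rewrite Rmult_comm. apply (norm_RInt_le_const_abs g s t); [intros; apply HM|].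
    apply (@RInt_correct R_CompleteNormedModule), (lipschitz_ex_RInt g K), Hg.
  - pose proof (RInt_Chasles g 0 s t (lipschitz_ex_RInt g K 0 s Hg) (lipschitz_ex_RInt g K s t Hg))
      as Hch.
    change (RInt g 0 s + RInt g s t = RInt g 0 t) in Hch. lra.
Qed.

Lemma is_derive_primitive (g : R -> R) (c t : R) : (forall x, continuous g x) ->
  is_derive (fun u => c + RInt g 0 u) t (g t).
Proof.
  intros Hg. rewrite <- (Rplus_0_l (g t)).
  apply (is_derive_plus (fun _ => c) (RInt g 0)); [exact (is_derive_const c t)|].
  apply (is_derive_RInt g (RInt g 0) 0 t); [|apply Hg].
  apply filter_forall. intros u.
  apply (@RInt_correct R_CompleteNormedModule), (@ex_RInt_continuous R_CompleteNormedModule).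
  intros; apply Hg.
Qed.

Lemma is_RInt_exp (B lam t : R) : 0 < lam ->
  is_RInt (fun s => B * exp (lam * s)) 0 t (B * (exp (lam * t) - 1) / lam).
Proof.
  intros Hl.
  replace (B * (exp (lam * t) - 1) / lam) with
    (minus (B * exp (lam * t) / lam) (B * exp (lam * 0) / lam))
    by (unfold minus, plus, opp; simpl; rewrite Rmult_0_r, exp_0; field; lra).
  apply (@is_RInt_derive R_CompleteNormedModule (fun s => B * exp (lam * s) / lam)).
  - intros x _. auto_derive; [exact I | field; lra].
  - intros x _. apply (is_derive_continuous _ _ (B * (lam * exp (lam * x)))).
    auto_derive; [exact I | ring].
Qed.

(* The weight [e^(lam s)] turns integration into a contraction by the factor [1 / lam]. *)
Lemma RInt_diff_exp_bound (g g' : R -> R) (K B lam t : R) :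
  lipschitz g K -> lipschitz g' K -> 0 < lam -> 0 <= t ->
  (forall s, 0 <= s <= t -> Rabs (g' s - g s) <= B * exp (lam * s)) ->
  Rabs (RInt g' 0 t - RInt g 0 t) <= B * exp (lam * t) / lam.
Proof.
  intros Hg Hg' Hlam Ht Hb.
  assert (HB : 0 <= B).
  { pose proof (Hb 0 ltac:(lra)). rewrite Rmult_0_r, exp_0, Rmult_1_r in H.
    pose proof (Rabs_pos (g' 0 - g 0)). lra. }
  assert (Hdiff : lipschitz (fun s => g' s - g s) (K + K)).
  { intros s u. pose proof (Hg s u); pose proof (Hg' s u).
    pose proof (Rabs_triang (g' u - g' s) (- (g u - g s))). rewrite Rabs_Ropp in H1.
    replace (g' u - g u - (g' s - g s)) with (g' u - g' s + - (g u - g s)) by ring. lra. }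
  assert (Hminus : RInt g' 0 t - RInt g 0 t = RInt (fun s => g' s - g s) 0 t).
  { transitivity (minus (RInt g' 0 t) (RInt g 0 t)); [reflexivity|].
    rewrite <- (RInt_minus g' g); [reflexivity | eapply lipschitz_ex_RInt; eassumption ..]. }
  rewrite Hminus.
  eapply Rle_trans; [apply abs_RInt_le; [exact Ht | eapply lipschitz_ex_RInt, Hdiff]|].
  eapply Rle_trans; [apply (RInt_le _ (fun s => B * exp (lam * s))); [exact Ht| | |]|].
  - apply (lipschitz_ex_RInt _ (K + K)). intros s u.
    eapply Rle_trans; [apply Rabs_triang_inv2 | apply Hdiff].
  - eexists. apply is_RInt_exp, Hlam.
  - intros x Hx. apply Hb. lra.
  - rewrite (is_RInt_unique _ _ _ _ (is_RInt_exp B lam t Hlam)).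
    apply Rmult_le_compat_r; [left; apply Rinv_0_lt_compat, Hlam | lra].
Qed.

Lemma is_lim_seq_le_const (u : nat -> R) (l B : R) (k : nat) :
  is_lim_seq u l -> (forall m, (k <= m)%nat -> u m <= B) -> l <= B.
Proof.
  intros Hu Hb.
  apply (is_lim_seq_le_loc u (fun _ => B) l B); [|exact Hu | apply is_lim_seq_const].
  exists k. exact Hb.
Qed.

Lemma geom_half_small (K eps : R) : 0 < eps -> exists N, K / 2 ^ N < eps.
Proof.
  intros Heps.
  assert (Hlim : is_lim_seq (fun k => K * (/ 2) ^ k) 0).
  { replace (Finite 0) with (Rbar_mult K 0) by (simpl; rewrite Rmult_0_r; reflexivity).
    apply is_lim_seq_scal_l, is_lim_seq_geom. rewrite Rabs_right; lra. }
  apply is_lim_seq_spec in Hlim. destruct (Hlim (mkposreal eps Heps)) as [N HN].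
  exists N. specialize (HN N (Nat.le_refl N)). simpl in HN.
  rewrite Rminus_0_r, pow_inv in HN.
  pose proof (Rle_abs (K * / 2 ^ N)). unfold Rdiv. lra.
Qed.

Lemma nonpos_of_le_geom_half (d K : R) : (forall k, d <= K / 2 ^ k) -> d <= 0.
Proof.
  intros Hd. destruct (Rle_lt_dec d 0) as [|Hpos]; [assumption|].
  destruct (geom_half_small K d Hpos) as [N HN]. specialize (Hd N). lra.
Qed.

Definition gap (p q : (R -> R) * (R -> R)) (t : R) : R :=
  Rabs (fst p t - fst q t) + Rabs (snd p t - snd q t).

Lemma gap_sym (p q : (R -> R) * (R -> R)) (t : R) : gap p q t = gap q p t.
Proof. unfold gap. rewrite (Rabs_minus_sym (fst p t)), (Rabs_minus_sym (snd p t)). reflexivity. Qed.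

Lemma gap_triangle (p q r : (R -> R) * (R -> R)) (t : R) : gap p r t <= gap p q t + gap q r t.
Proof.
  unfold gap.
  pose proof (Rabs_triang (fst p t - fst q t) (fst q t - fst r t)).
  pose proof (Rabs_triang (snd p t - snd q t) (snd q t - snd r t)).
  replace (fst p t - fst q t + (fst q t - fst r t)) with (fst p t - fst r t) in H by ring.
  replace (snd p t - snd q t + (snd q t - snd r t)) with (snd p t - snd r t) in H0 by ring.
  lra.
Qed.

Lemma Rmax_0_lipschitz : lipschitz (Rmax 0) 1.
Proof.
  intros s t. rewrite Rmult_1_l. unfold Rmax.
  destruct (Rle_dec 0 t); destruct (Rle_dec 0 s); apply Rabs_le;
    pose proof (Rle_abs (t - s)); pose proof (Rle_abs (- (t - s)));
    rewrite Rabs_Ropp in *; lra.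
Qed.

Ltac field_nonzero := field; repeat split; try apply pow_nonzero; lra.

Section Picard.

Variables (F1 F2 : R -> R -> R) (M L a0 b0 : R).
Hypothesis L_pos : 0 < L.
Hypotheses (F1_bound : forall u v, Rabs (F1 u v) <= M) (F2_bound : forall u v, Rabs (F2 u v) <= M).
Hypotheses (F1_lip : lipschitz2 F1 L) (F2_lip : lipschitz2 F2 L).

Definition picard_step (p : (R -> R) * (R -> R)) : (R -> R) * (R -> R) :=
  (fun t => a0 + RInt (fun s => F1 (fst p s) (snd p s)) 0 t,
   fun t => b0 + RInt (fun s => F2 (fst p s) (snd p s)) 0 t).

Definition picard_iter (k : nat) : (R -> R) * (R -> R) :=
  Nat.iter k picard_step (fun _ => a0, fun _ => b0).

Definition lipschitz_pair (p : (R -> R) * (R -> R)) : Prop :=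
  lipschitz (fst p) M /\ lipschitz (snd p) M.

Lemma bound_nonneg : 0 <= M.
Proof. pose proof (F1_bound 0 0). pose proof (Rabs_pos (F1 0 0)). lra. Qed.

Lemma picard_step_lipschitz (p : (R -> R) * (R -> R)) :
  lipschitz_pair p -> lipschitz_pair (picard_step p).
Proof.
  intros [Hp Hq]. split; apply (lipschitz_primitive _ (2 * L * M)).
  - apply lipschitz2_comp; [exact F1_lip | lra | exact Hp | exact Hq].
  - intro u. apply F1_bound.
  - apply lipschitz2_comp; [exact F2_lip | lra | exact Hp | exact Hq].
  - intro u. apply F2_bound.
Qed.

Lemma picard_iter_lipschitz (k : nat) : lipschitz_pair (picard_iter k).
Proof.
  induction k as [|k IH].
  - pose proof bound_nonneg as HM.
    split; intros s t; simpl; rewrite Rminus_eq_0, Rabs_R0;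
      apply Rmult_le_pos; [exact HM | apply Rabs_pos | exact HM | apply Rabs_pos].
  - exact (picard_step_lipschitz _ IH).
Qed.

Lemma picard_step_contract (p q : (R -> R) * (R -> R)) (B t : R) :
  lipschitz_pair p -> lipschitz_pair q -> 0 <= t ->
  (forall s, 0 <= s <= t -> gap p q s <= B * exp (4 * L * s)) ->
  gap (picard_step p) (picard_step q) t <= B * exp (4 * L * t) / 2.
Proof.
  intros [Hp1 Hp2] [Hq1 Hq2] Ht Hb.
  assert (Hcomp : forall F, lipschitz2 F L ->
    Rabs (RInt (fun s => F (fst p s) (snd p s)) 0 t - RInt (fun s => F (fst q s) (snd q s)) 0 t)
      <= L * B * exp (4 * L * t) / (4 * L)).
  { intros F HF. apply (RInt_diff_exp_bound _ _ (2 * L * M)); [| | lra | exact Ht |].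
    - apply lipschitz2_comp; [exact HF | lra | exact Hq1 | exact Hq2].
    - apply lipschitz2_comp; [exact HF | lra | exact Hp1 | exact Hp2].
    - intros s Hs. eapply Rle_trans; [apply HF|]. rewrite Rmult_assoc.
      apply Rmult_le_compat_l; [lra | apply Hb, Hs]. }
  pose proof (Hcomp F1 F1_lip). pose proof (Hcomp F2 F2_lip).
  unfold gap, picard_step; simpl. rewrite !Rminus_plus_l_l.
  replace (B * exp (4 * L * t) / 2) with
    (L * B * exp (4 * L * t) / (4 * L) + L * B * exp (4 * L * t) / (4 * L)) by (field; lra).
  lra.
Qed.

Lemma picard_iter_succ_gap (k : nat) (t : R) : 0 <= t ->
  gap (picard_iter (S k)) (picard_iter k) t <= M / (2 * L) * exp (4 * L * t) / 2 ^ k.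
Proof.
  revert t. induction k as [|k IH]; intros t Ht.
  - unfold gap; simpl. rewrite !Rplus_minus_l, Rdiv_1_r.
    pose proof (norm_RInt_le_const_abs (fun _ => F1 a0 b0) 0 t _ M (fun _ _ => F1_bound a0 b0)
                  (RInt_correct _ _ _ (ex_RInt_const _ _ _))) as H1.
    pose proof (norm_RInt_le_const_abs (fun _ => F2 a0 b0) 0 t _ M (fun _ _ => F2_bound a0 b0)
                  (RInt_correct _ _ _ (ex_RInt_const _ _ _))) as H2.
    change norm with Rabs in H1, H2. rewrite Rminus_0_r, (Rabs_right t) in H1, H2 by lra.
    pose proof (exp_ineq1_le (4 * L * t)). pose proof bound_nonneg.
    assert (t * M + t * M = M / (2 * L) * (4 * L * t)) by (field; lra).
    enough (M / (2 * L) * (4 * L * t) <= M / (2 * L) * exp (4 * L * t)) by lra.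
    apply Rmult_le_compat_l; [apply Rdiv_le_0_compat|]; lra.
  - change (picard_iter (S (S k))) with (picard_step (picard_iter (S k))).
    change (picard_iter (S k)) with (picard_step (picard_iter k)) at 2.
    replace (M / (2 * L) * exp (4 * L * t) / 2 ^ S k)
      with ((M / (2 * L) / 2 ^ k) * exp (4 * L * t) / 2) by (simpl; field_nonzero).
    apply picard_step_contract; [apply picard_iter_lipschitz .. | exact Ht |].
    intros s Hs. eapply Rle_trans; [apply IH; lra|]. right. field_nonzero.
Qed.

Lemma picard_iter_gap (k m : nat) (t : R) : (k <= m)%nat -> 0 <= t ->
  gap (picard_iter m) (picard_iter k) t <= 2 * (M / (2 * L)) * exp (4 * L * t) / 2 ^ k.
Proof.
  intros Hkm Ht. set (E := M / (2 * L) * exp (4 * L * t)).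
  assert (HE : 0 <= E).
  { unfold E. pose proof bound_nonneg. pose proof (exp_pos (4 * L * t)).
    apply Rmult_le_pos; [apply Rdiv_le_0_compat|]; lra. }
  enough (Htel : forall j,
            gap (picard_iter (k + j)) (picard_iter k) t <= 2 * E / 2 ^ k - 2 * E / 2 ^ (k + j)).
  { replace m with (k + (m - k))%nat by lia. eapply Rle_trans; [apply Htel|].
    assert (0 <= 2 * E / 2 ^ (k + (m - k))) by (apply Rdiv_le_0_compat; [lra | apply pow_lt; lra]).
    unfold E in *. lra. }
  induction j as [|j IH].
  - rewrite Nat.add_0_r. unfold gap. rewrite !Rminus_eq_0, Rabs_R0. lra.
  - rewrite Nat.add_succ_r.
    pose proof (gap_triangle (picard_iter (S (k + j))) (picard_iter (k + j)) (picard_iter k) t).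
    pose proof (picard_iter_succ_gap (k + j) t Ht). fold E in H0.
    replace (2 * E / 2 ^ k - 2 * E / 2 ^ S (k + j))
      with (2 * E / 2 ^ k - 2 * E / 2 ^ (k + j) + E / 2 ^ (k + j))
      by (simpl; field_nonzero).
    lra.
Qed.

(* Extended to [t < 0] by the value at [0], so that the limit is Lipschitz on all of [R]. *)
Definition picard_limit : (R -> R) * (R -> R) :=
  (fun t => real (Lim_seq (fun k => fst (picard_iter k) (Rmax 0 t))),
   fun t => real (Lim_seq (fun k => snd (picard_iter k) (Rmax 0 t)))).

Lemma picard_limit_correct (t : R) :
  is_lim_seq (fun k => fst (picard_iter k) (Rmax 0 t)) (fst picard_limit t) /\
  is_lim_seq (fun k => snd (picard_iter k) (Rmax 0 t)) (snd picard_limit t).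
Proof.
  set (s := Rmax 0 t). assert (Hs : 0 <= s) by apply Rmax_l.
  assert (Hcauchy : forall eps : posreal, exists N, forall k m, (N <= k)%nat -> (N <= m)%nat ->
            gap (picard_iter k) (picard_iter m) s < eps).
  { intros eps.
    destruct (geom_half_small (4 * (M / (2 * L)) * exp (4 * L * s)) eps (cond_pos eps)) as [N HN].
    exists N. intros k m Hk Hm.
    pose proof (gap_triangle (picard_iter k) (picard_iter N) (picard_iter m) s).
    rewrite (gap_sym (picard_iter N)) in H.
    pose proof (picard_iter_gap N k s Hk Hs). pose proof (picard_iter_gap N m s Hm Hs).
    replace (4 * (M / (2 * L)) * exp (4 * L * s) / 2 ^ N) with
      (2 * (M / (2 * L)) * exp (4 * L * s) / 2 ^ N + 2 * (M / (2 * L)) * exp (4 * L * s) / 2 ^ N)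
      in HN by (field_nonzero).
    lra. }
  assert (Hfst : ex_finite_lim_seq (fun k => fst (picard_iter k) s)).
  { apply ex_lim_seq_cauchy_corr. intros eps. destruct (Hcauchy eps) as [N HN].
    exists N. intros k m Hk Hm. pose proof (HN k m Hk Hm). unfold gap in H.
    pose proof (Rabs_pos (snd (picard_iter k) s - snd (picard_iter m) s)). lra. }
  assert (Hsnd : ex_finite_lim_seq (fun k => snd (picard_iter k) s)).
  { apply ex_lim_seq_cauchy_corr. intros eps. destruct (Hcauchy eps) as [N HN].
    exists N. intros k m Hk Hm. pose proof (HN k m Hk Hm). unfold gap in H.
    pose proof (Rabs_pos (fst (picard_iter k) s - fst (picard_iter m) s)). lra. }
  destruct Hfst as [l1 H1]. destruct Hsnd as [l2 H2]. simpl. fold s.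
  rewrite (is_lim_seq_unique _ _ H1), (is_lim_seq_unique _ _ H2). split; assumption.
Qed.

Lemma picard_limit_gap (k : nat) (t : R) : 0 <= t ->
  gap (picard_iter k) picard_limit t <= 2 * (M / (2 * L)) * exp (4 * L * t) / 2 ^ k.
Proof.
  intros Ht. destruct (picard_limit_correct t) as [H1 H2]. rewrite Rmax_right in H1, H2 by exact Ht.
  apply (is_lim_seq_le_const (fun m => gap (picard_iter k) (picard_iter m) t) _ _ k).
  - unfold gap.
    apply (is_lim_seq_plus' _ _ (Rabs (fst (picard_iter k) t - fst picard_limit t)));
      apply (is_lim_seq_abs _ (Finite _)), is_lim_seq_minus';
      try apply is_lim_seq_const; assumption.
  - intros m Hm. rewrite gap_sym. apply picard_iter_gap; assumption.
Qed.

Lemma picard_limit_lipschitz : lipschitz_pair picard_limit.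
Proof.
  assert (Hlim : forall (f : nat -> R -> R) (g : R -> R),
            (forall k, lipschitz (f k) M) ->
            (forall t, is_lim_seq (fun k => f k (Rmax 0 t)) (g t)) -> lipschitz g M).
  { intros f g Hf Hg s t.
    apply (is_lim_seq_le_const (fun k => Rabs (f k (Rmax 0 t) - f k (Rmax 0 s))) _ _ 0).
    - apply (is_lim_seq_abs _ (Finite _)), is_lim_seq_minus'; apply Hg.
    - intros k _. eapply Rle_trans; [apply Hf|].
      apply Rmult_le_compat_l; [apply bound_nonneg|].
      pose proof (Rmax_0_lipschitz s t). lra. }
  split.
  - apply (Hlim (fun k => fst (picard_iter k))); [apply picard_iter_lipschitz|].
    intro t. exact (proj1 (picard_limit_correct t)).
  - apply (Hlim (fun k => snd (picard_iter k))); [apply picard_iter_lipschitz|].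
    intro t. exact (proj2 (picard_limit_correct t)).
Qed.

Lemma picard_limit_fixed (t : R) : 0 <= t ->
  fst picard_limit t = fst (picard_step picard_limit) t /\
  snd picard_limit t = snd (picard_step picard_limit) t.
Proof.
  intros Ht.
  assert (Hzero : gap (picard_step picard_limit) picard_limit t <= 0).
  { apply (nonpos_of_le_geom_half _ (2 * (M / (2 * L)) * exp (4 * L * t))). intros k.
    pose proof (gap_triangle (picard_step picard_limit) (picard_iter (S k)) picard_limit t).
    pose proof (picard_limit_gap (S k) t Ht).
    pose proof (picard_step_contract picard_limit (picard_iter k) (2 * (M / (2 * L)) / 2 ^ k) t
                  picard_limit_lipschitz (picard_iter_lipschitz k) Ht).
    assert (Hk : forall s, 0 <= s <= t ->
               gap picard_limit (picard_iter k) s <= 2 * (M / (2 * L)) / 2 ^ k * exp (4 * L * s)).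
    { intros s Hs. rewrite gap_sym. eapply Rle_trans; [apply picard_limit_gap; lra|].
      right. field_nonzero. }
    specialize (H1 Hk). change (picard_iter (S k)) with (picard_step (picard_iter k)) in *.
    replace (2 * (M / (2 * L)) * exp (4 * L * t) / 2 ^ k) with
      (2 * (M / (2 * L)) / 2 ^ k * exp (4 * L * t) / 2
       + 2 * (M / (2 * L)) * exp (4 * L * t) / 2 ^ S k)
      by (simpl; field_nonzero).
    lra. }
  unfold gap in Hzero.
  pose proof (Rabs_pos (fst (picard_step picard_limit) t - fst picard_limit t)).
  pose proof (Rabs_pos (snd (picard_step picard_limit) t - snd picard_limit t)).
  split; symmetry; apply Rminus_diag_uniq, Rabs_eq_0; lra.
Qed.

Theorem picard_existence : exists x1 x2 : R -> R,
  x1 0 = a0 /\ x2 0 = b0 /\ (forall t, continuous x1 t) /\ (forall t, continuous x2 t) /\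
  (forall t, 0 < t -> is_derive x1 t (F1 (x1 t) (x2 t)) /\ is_derive x2 t (F2 (x1 t) (x2 t))).
Proof.
  destruct picard_limit_lipschitz as [Lx1 Lx2].
  assert (Cx : forall F, lipschitz2 F L -> forall s,
             continuous (fun u => F (fst picard_limit u) (snd picard_limit u)) s).
  { intros F HF s. apply (lipschitz_continuous _ (2 * L * M)).
    apply lipschitz2_comp; [exact HF | lra | exact Lx1 | exact Lx2]. }
  exists (fst picard_limit), (snd picard_limit).
  split; [|split; [|split; [|split]]].
  - rewrite (proj1 (picard_limit_fixed 0 (Rle_refl 0))). simpl. rewrite RInt_point. apply Rplus_0_r.
  - rewrite (proj2 (picard_limit_fixed 0 (Rle_refl 0))). simpl. rewrite RInt_point. apply Rplus_0_r.
  - intro t. exact (lipschitz_continuous _ _ t Lx1).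
  - intro t. exact (lipschitz_continuous _ _ t Lx2).
  - intros t Ht.
    assert (Hloc : locally t (fun u => 0 <= u)).
    { exists (mkposreal t Ht). intros u Hu. change (Rabs (u - t) < t) in Hu.
      pose proof (Rabs_def2 _ _ Hu). lra. }
    split.
    + apply (is_derive_ext_loc (fst (picard_step picard_limit))).
      * apply (filter_imp _ _ (fun u Hu => eq_sym (proj1 (picard_limit_fixed u Hu))) Hloc).
      * apply (is_derive_primitive (fun s => F1 (fst picard_limit s) (snd picard_limit s))).
        apply Cx, F1_lip.
    + apply (is_derive_ext_loc (snd (picard_step picard_limit))).
      * apply (filter_imp _ _ (fun u Hu => eq_sym (proj2 (picard_limit_fixed u Hu))) Hloc).
      * apply (is_derive_primitive (fun s => F2 (fst picard_limit s) (snd picard_limit s))).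
        apply Cx, F2_lip.
Qed.

End Picard.

Definition clamp (x : R) : R := Rmax 0 (Rmin 1 x).

Lemma clamp_range (x : R) : 0 <= clamp x <= 1.
Proof. unfold clamp. split; [apply Rmax_l | apply Rmax_lub; [lra | apply Rmin_l]]. Qed.

Lemma clamp_id (x : R) : 0 <= x <= 1 -> clamp x = x.
Proof. intros Hx. unfold clamp. rewrite Rmin_right, Rmax_right; lra. Qed.

Lemma clamp_lipschitz : lipschitz clamp 1.
Proof.
  intros s t. rewrite Rmult_1_l. unfold clamp, Rmax, Rmin. apply Rabs_le.
  pose proof (Rle_abs (t - s)). pose proof (Rle_abs (- (t - s))). rewrite Rabs_Ropp in *.
  destruct (Rle_dec 1 t); destruct (Rle_dec 1 s);
  repeat match goal with |- context [Rle_dec ?a ?b] => destruct (Rle_dec a b) end;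
  repeat match goal with H : ~ (_ <= _) |- _ => apply Rnot_le_lt in H end; lra.
Qed.

Definition lipschitz_on_box (F : R -> R -> R) (L : R) : Prop :=
  forall a b a' b', 0 <= a <= 1 -> 0 <= b <= 1 -> 0 <= a' <= 1 -> 0 <= b' <= 1 ->
  Rabs (F a b - F a' b') <= L * (Rabs (a - a') + Rabs (b - b')).

Definition clamped (F : R -> R -> R) (u v : R) : R := F (clamp u) (clamp v).

Lemma clamped_lipschitz (F : R -> R -> R) (L : R) : 0 <= L ->
  lipschitz_on_box F L -> lipschitz2 (clamped F) L.
Proof.
  intros HL HF u v u' v'. unfold clamped.
  eapply Rle_trans; [apply HF; apply clamp_range|].
  apply Rmult_le_compat_l; [exact HL|].
  pose proof (clamp_lipschitz u' u). pose proof (clamp_lipschitz v' v).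
  rewrite Rmult_1_l in *. lra.
Qed.

Lemma clamped_bound (F : R -> R -> R) (L : R) : 0 <= L -> F 0 0 = 0 ->
  lipschitz_on_box F L -> forall u v, Rabs (clamped F u v) <= 2 * L.
Proof.
  intros HL H0 HF u v. unfold clamped.
  pose proof (clamp_range u). pose proof (clamp_range v).
  pose proof (HF (clamp u) (clamp v) 0 0 ltac:(lra) ltac:(lra) ltac:(lra) ltac:(lra)) as Hb.
  rewrite H0, !Rminus_0_r, (Rabs_right (clamp u)), (Rabs_right (clamp v)) in Hb by lra.
  apply (Rle_trans _ _ _ Hb). nra.
Qed.

Lemma abs_lin_comb_le (d P Q L a a' b b' : R) :
  d = (a - a') * P + (b - b') * Q -> Rabs P <= L -> Rabs Q <= L ->
  Rabs d <= L * (Rabs (a - a') + Rabs (b - b')).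
Proof.
  intros -> HP HQ. eapply Rle_trans; [apply Rabs_triang|]. rewrite !Rabs_mult.
  pose proof (Rmult_le_compat_l _ _ _ (Rabs_pos (a - a')) HP).
  pose proof (Rmult_le_compat_l _ _ _ (Rabs_pos (b - b')) HQ). lra.
Qed.

(** * The trapping region *)

Lemma INR_ge2 (n : nat) : (2 <= n)%nat -> 2 <= INR n.
Proof. intro hn. apply (le_INR 2 n) in hn. simpl in hn. lra. Qed.

Definition margin (n : nat) (y z : R) : R := y * (z ^ 2 + INR n) - (INR n + 1) * z ^ 2.

Lemma fy_margin (n : nat) (y z : R) : fy n y z = - margin n y z.
Proof. unfold fy, margin. ring. Qed.

Lemma in_D_margin (n : nat) (y z : R) : in_D n y z -> 0 <= margin n y z.
Proof.
  intros [Hy [Hz [Hlow _]]]. pose proof (pos_INR n).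
  assert (Hw : 0 < z ^ 2 + INR n) by nra.
  apply (Rmult_le_compat_r (z ^ 2 + INR n)) in Hlow; [|lra].
  unfold Rdiv in Hlow. rewrite Rmult_assoc, Rinv_l, Rmult_1_r in Hlow by lra.
  unfold margin. lra.
Qed.

Lemma margin_box (n : nat) (y z y0 : R) : (1 <= n)%nat ->
  0 <= margin n y z -> y <= y0 -> y0 < 1 -> 0 < z ->
  0 < y < 1 /\ 0 < z < 1 /\ z ^ 2 <= y.
Proof.
  intros hn Hm Hy Hy0 Hz. apply (le_INR 1 n) in hn. simpl in hn. unfold margin in Hm.
  assert (0 < z ^ 2) by nra.
  assert (0 < y) by nra.
  assert (z ^ 2 <= y) by nra.
  assert (z < 1) by nra.
  lra.
Qed.

Lemma is_derive_margin (n : nat) (y z : R -> R) (t dy dz : R) :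
  is_derive y t dy -> is_derive z t dz ->
  is_derive (fun t => margin n (y t) (z t)) t
    (dy * (z t ^ 2 + INR n) + (y t - (INR n + 1)) * (2 * z t * dz)).
Proof.
  intros Hy Hz. unfold margin.
  auto_derive; change (fun x => y x) with y; change (fun x => z x) with z.
  - repeat split; eexists; eassumption.
  - rewrite (is_derive_unique _ _ _ Hy), (is_derive_unique _ _ _ Hz). ring.
Qed.

(* Along the flow [margin' = - A margin + B] with [A > 0] and [B >= 0] on the unit box. *)
Lemma margin_flow_nonneg (n : nat) (y z : R) : (1 <= n)%nat ->
  0 < y < 1 -> 0 < z < 1 -> margin n y z < 0 ->
  0 <= fy n y z * (z ^ 2 + INR n) + (y - (INR n + 1)) * (2 * z * fz n y z).
Proof.
  intros hn Hy Hz Hm. apply (le_INR 1 n) in hn. simpl in hn.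
  set (N := INR n) in *. set (w := z ^ 2).
  assert (Hw : 0 < w) by (unfold w; nra).
  replace (fy n y z * (w + N) + (y - (N + 1)) * (2 * z * fz n y z)) with
    ((- margin n y z * (N * (w + N) ^ 2 + 2 * w * (N + 1) * (N + 1 - y))
      + 2 * N * w * (N + 1 - y) * (1 - w) ^ 2) / (N * (w + N)))
    by (unfold w, N, fy, fz, margin; field; unfold N, w in *; split; apply Rgt_not_eq; nra).
  apply Rdiv_le_0_compat; [|apply Rmult_lt_0_compat; lra].
  assert (0 <= (w + N) ^ 2) by apply pow2_ge_0.
  assert (0 <= (1 - w) ^ 2) by apply pow2_ge_0.
  assert (0 <= N * (w + N) ^ 2 + 2 * w * (N + 1) * (N + 1 - y)).
  { apply Rplus_le_le_0_compat; repeat apply Rmult_le_pos; lra. }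
  assert (0 <= 2 * N * w * (N + 1 - y)) by (repeat apply Rmult_le_pos; lra).
  assert (0 <= 2 * N * w * (N + 1 - y) * (1 - w) ^ 2) by (apply Rmult_le_pos; assumption).
  nra.
Qed.

Lemma fz_growth (n : nat) (y z : R) : (1 <= n)%nat ->
  0 < y < 1 -> 0 < z < 1 -> 0 < fz n y z + 2 * z.
Proof.
  intros hn Hy Hz. apply (le_INR 1 n) in hn. simpl in hn.
  replace (fz n y z + 2 * z) with
    (z * ((INR n + 1) * y / INR n + (1 - 1 / INR n) + (1 - z ^ 2)))
    by (unfold fz; field; lra).
  apply Rmult_lt_0_compat; [lra|].
  assert (0 < (INR n + 1) * y / INR n) by (apply Rdiv_lt_0_compat; nra).
  assert (1 / INR n <= 1) by (apply Rle_div_l; lra).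
  nra.
Qed.

Lemma lyapunov_decay (n : nat) (y0 y z : R) : (2 <= n)%nat -> y0 < 1 ->
  0 < y < 1 -> 0 < z < 1 -> y <= y0 -> 0 <= margin n y z -> z ^ 2 <= y ->
  fy n y z + (1 / 3) * (2 * z * fz n y z)
    <= - ((1 - y0) ^ 2 / (3 * (INR n + 1))) * (y + (1 / 3) * z ^ 2).
Proof.
  intros hn Hy0 Hy Hz Hyy0 Hm Hzy. pose proof (INR_ge2 n hn).
  set (N := INR n) in *. set (w := z ^ 2) in *. set (h := margin n y z) in *.
  assert (Hw : 0 < w) by (unfold w; nra).
  set (A := 1 - 2 * w * (N + 1) / (3 * N * (w + N))).
  replace (fy n y z + (1 / 3) * (2 * z * fz n y z))
    with (- h * A - (2 / 3) * (w * (1 - w) ^ 2 / (w + N)))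
    by (unfold A, h, w, N, margin, fy, fz; field; unfold N, w in *; split; apply Rgt_not_eq; nra).
  assert (HA : 1 / 2 <= A).
  { unfold A. enough (2 * w * (N + 1) / (3 * N * (w + N)) <= 1 / 2) by lra.
    apply Rle_div_l; nra. }
  set (K := (1 - y0) ^ 2 / (N + 1)).
  assert (HK : 0 < K <= 1 / 3).
  { unfold K. split; [apply Rdiv_lt_0_compat; [apply pow_lt|]; lra|].
    apply Rle_div_l; nra. }
  assert (Hdecay : K <= (1 - w) ^ 2 / (w + N)).
  { unfold K, Rdiv. apply Rmult_le_compat.
    - apply pow2_ge_0.
    - left. apply Rinv_0_lt_compat. lra.
    - nra.
    - apply Rinv_le_contravar; lra. }
  replace (w * (1 - w) ^ 2 / (w + N)) with (w * ((1 - w) ^ 2 / (w + N))) by (field; lra).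
  assert (Hy_le : y <= h / 2 + 3 / 2 * w) by (unfold h, margin; fold N w; nra).
  replace ((1 - y0) ^ 2 / (3 * (N + 1))) with (K / 3) by (unfold K; field; lra).
  nra.
Qed.

Lemma fy_lipschitz_on_box (n : nat) : (2 <= n)%nat -> lipschitz_on_box (fy n) (2 * INR n + 8).
Proof.
  intros hn a b a' b' Ha Hb Ha' Hb'. pose proof (INR_ge2 n hn).
  apply (abs_lin_comb_le _ (- (b ^ 2 + INR n)) ((b + b') * (INR n + 1 - a'))).
  - unfold fy. ring.
  - apply Rabs_le. simpl. split; nra.
  - apply Rabs_le. split; nra.
Qed.

Lemma fz_lipschitz_on_box (n : nat) : (2 <= n)%nat -> lipschitz_on_box (fz n) (2 * INR n + 8).
Proof.
  intros hn a b a' b' Ha Hb Ha' Hb'. pose proof (INR_ge2 n hn).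
  assert (Hq : 0 <= (INR n + 1) / INR n <= 2).
  { split; [apply Rdiv_le_0_compat; lra | apply Rle_div_l; lra]. }
  assert (Hr : -1 <= ((INR n + 1) * a' - 1) / INR n <= 2).
  { split; [apply Rle_div_r | apply Rle_div_l]; nra. }
  apply (abs_lin_comb_le _ ((INR n + 1) / INR n * b)
           (((INR n + 1) * a' - 1) / INR n - (b ^ 2 + b * b' + b' ^ 2))).
  - unfold fz. field. lra.
  - apply Rabs_le. split; nra.
  - apply Rabs_le. simpl. split; nra.
Qed.

Lemma continuity_2d_pt_margin (n : nat) (u v : R) : continuity_2d_pt (margin n) u v.
Proof.
  unfold margin. simpl.
  repeat first [ apply continuity_2d_pt_minus | apply continuity_2d_pt_plus
               | apply continuity_2d_pt_mult | apply continuity_2d_pt_id1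
               | apply continuity_2d_pt_id2 | apply continuity_2d_pt_const ].
Qed.

Lemma is_derive_scaled_exp (z : R -> R) (c t dz : R) : is_derive z t dz ->
  is_derive (fun t => z t * exp (c * t)) t ((dz + c * z t) * exp (c * t)).
Proof.
  intros Hz. auto_derive; change (fun x => z x) with z.
  - repeat split. exists dz. exact Hz.
  - rewrite (is_derive_unique _ _ _ Hz). ring.
Qed.

Lemma right_continuous_scaled_exp (z : R -> R) (c s : R) :
  right_continuous z s -> right_continuous (fun t => z t * exp (c * t)) s.
Proof.
  intros Hz. apply (right_continuous_comp2 z (fun t => exp (c * t)) Rmult); [exact Hz| |].
  - apply continuous_right_continuous. apply (is_derive_continuous _ _ (c * exp (c * s))).
    auto_derive; [exact I | ring].
  - apply continuity_2d_pt_mult; [apply continuity_2d_pt_id1 | apply continuity_2d_pt_id2].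
Qed.

(* The last condition keeps [z] away from [0]: [z e^(2t)] is nondecreasing in the unit box. *)
Definition trapped (n : nat) (y z : R -> R) (y0 z0 t : R) : Prop :=
  0 <= margin n (y t) (z t) /\ y t <= y0 /\ z0 <= z t * exp (2 * t).

Lemma trapped_box (n : nat) (y z : R -> R) (y0 z0 t : R) : (1 <= n)%nat -> in_D n y0 z0 ->
  trapped n y z y0 z0 t -> 0 < y t < 1 /\ 0 < z t < 1 /\ z t ^ 2 <= y t.
Proof.
  intros hn [_ [Hz0 [_ Hy0]]] [Hm [Hy Hz]].
  apply (margin_box n _ _ y0 hn Hm Hy Hy0).
  pose proof (exp_pos (2 * t)). nra.
Qed.

Section Invariance.

Variables (n : nat) (Gy Gz : R -> R -> R) (y z : R -> R) (y0 z0 : R).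
Hypothesis hn : (1 <= n)%nat.
Hypothesis HD : in_D n y0 z0.
Hypothesis G_box : forall u v, 0 < u < 1 -> 0 < v < 1 -> Gy u v = fy n u v /\ Gz u v = fz n u v.
Hypotheses (y_init : y 0 = y0) (z_init : z 0 = z0).
Hypotheses (y_rc0 : right_continuous y 0) (z_rc0 : right_continuous z 0).
Hypothesis y_der : forall t, 0 < t -> is_derive y t (Gy (y t) (z t)).
Hypothesis z_der : forall t, 0 < t -> is_derive z t (Gz (y t) (z t)).

Lemma right_continuous_solution (s : R) : 0 <= s -> right_continuous y s /\ right_continuous z s.
Proof.
  intros Hs. destruct (Req_dec s 0) as [->|Hs0]; [split; assumption|].
  split; apply continuous_right_continuous;
    [apply (is_derive_continuous _ _ _ (y_der s ltac:(lra)))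
    |apply (is_derive_continuous _ _ _ (z_der s ltac:(lra)))].
Qed.

Lemma trapped_closed (s : R) : 0 < s ->
  (forall t, 0 <= t < s -> trapped n y z y0 z0 t) -> trapped n y z y0 z0 s.
Proof.
  intros Hs Hbefore. pose proof (y_der s Hs) as Dy. pose proof (z_der s Hs) as Dz.
  split; [|split].
  - apply (nonneg_of_continuous (fun t => margin n (y t) (z t)) 0 s);
      [exact Hs| |intros t Ht; apply Hbefore, Ht].
    exact (is_derive_continuous _ _ _ (is_derive_margin n y z s _ _ Dy Dz)).
  - enough (0 <= y0 - y s) by lra.
    apply (nonneg_of_continuous (fun t => y0 - y t) 0); [exact Hs| |].
    + exact (continuous_minus (fun _ => y0) y s (continuous_const _ _)
               (is_derive_continuous _ _ _ Dy)).
    + intros t Ht. destruct (Hbefore t Ht) as [_ [H _]]. lra.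
  - enough (0 <= z s * exp (2 * s) - z0) by lra.
    apply (nonneg_of_continuous (fun t => z t * exp (2 * t) - z0) 0); [exact Hs| |].
    + exact (continuous_minus _ (fun _ => z0) s
               (is_derive_continuous _ _ _ (is_derive_scaled_exp z 2 s _ Dz))
               (continuous_const _ _)).
    + intros t Ht. destruct (Hbefore t Ht) as [_ [_ H]]. lra.
Qed.

Lemma box_after (s : R) : 0 <= s -> trapped n y z y0 z0 s ->
  exists d, 0 < d /\ forall t, s <= t < s + d -> 0 < y t < 1 /\ 0 < z t < 1.
Proof.
  intros Hs Htr. destruct (trapped_box n y z y0 z0 s hn HD Htr) as [Hy [Hz _]].
  destruct (right_continuous_solution s Hs) as [RCy RCz].
  set (eps := Rmin (Rmin (y s) (1 - y s)) (Rmin (z s) (1 - z s))).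
  assert (Heps : 0 < eps) by (unfold eps; repeat apply Rmin_pos; lra).
  assert (Heps_le : eps <= y s /\ eps <= 1 - y s /\ eps <= z s /\ eps <= 1 - z s).
  { unfold eps.
    pose proof (Rmin_l (Rmin (y s) (1 - y s)) (Rmin (z s) (1 - z s))).
    pose proof (Rmin_r (Rmin (y s) (1 - y s)) (Rmin (z s) (1 - z s))).
    pose proof (Rmin_l (y s) (1 - y s)); pose proof (Rmin_r (y s) (1 - y s)).
    pose proof (Rmin_l (z s) (1 - z s)); pose proof (Rmin_r (z s) (1 - z s)). lra. }
  destruct (RCy eps Heps) as [d1 [Hd1 Hy1]].
  destruct (RCz eps Heps) as [d2 [Hd2 Hz2]].
  pose proof (Rmin_l d1 d2); pose proof (Rmin_r d1 d2).
  exists (Rmin d1 d2); split; [apply Rmin_pos; assumption|]. intros t Ht.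
  pose proof (Rabs_def2 _ _ (Hy1 t ltac:(lra))).
  pose proof (Rabs_def2 _ _ (Hz2 t ltac:(lra))). lra.
Qed.

Lemma trapped_open (s : R) : 0 <= s -> trapped n y z y0 z0 s ->
  exists d, 0 < d /\ forall t, s < t < s + d -> trapped n y z y0 z0 t.
Proof.
  intros Hs Htr. destruct Htr as [Hm [Hy Hz]].
  destruct (box_after s Hs (conj Hm (conj Hy Hz))) as [d [Hd Hbox]].
  destruct (right_continuous_solution s Hs) as [RCy RCz].
  assert (Der : forall u, s < u < s + d ->
    is_derive y u (fy n (y u) (z u)) /\ is_derive z u (fz n (y u) (z u))).
  { intros u Hu. destruct (Hbox u ltac:(lra)) as [By Bz].
    destruct (G_box _ _ By Bz) as [<- <-]. split; [apply y_der | apply z_der]; lra. }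
  assert (Hmargin : forall t, s < t < s + d -> 0 <= margin n (y t) (z t)).
  { intros t Ht. apply (nonneg_barrier (fun t => margin n (y t) (z t)) s t); [lra | exact Hm | |].
    - apply right_continuous_comp2; [exact RCy | exact RCz | apply continuity_2d_pt_margin].
    - intros u Hu. destruct (Der u ltac:(lra)) as [Dy Dz].
      eexists; split; [exact (is_derive_margin n y z u _ _ Dy Dz)|].
      destruct (Hbox u ltac:(lra)) as [By Bz]. apply margin_flow_nonneg; assumption. }
  exists d; split; [exact Hd|]. intros t Ht. split; [|split].
  - apply Hmargin, Ht.
  - enough (y t <= y s) by lra.
    apply ge_of_is_derive_nonpos; [lra | exact RCy |].
    intros u Hu. destruct (Der u ltac:(lra)) as [Dy _].
    exists (fy n (y u) (z u)); split; [exact Dy|].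
    rewrite fy_margin. pose proof (Hmargin u ltac:(lra)). lra.
  - enough (z s * exp (2 * s) <= z t * exp (2 * t)) by lra.
    apply (le_of_is_derive_nonneg (fun t => z t * exp (2 * t)));
      [lra | apply right_continuous_scaled_exp, RCz |].
    intros u Hu. destruct (Der u ltac:(lra)) as [_ Dz].
    eexists; split; [exact (is_derive_scaled_exp z 2 u _ Dz)|].
    destruct (Hbox u ltac:(lra)) as [By Bz].
    pose proof (fz_growth n _ _ hn By Bz). pose proof (exp_pos (2 * u)). nra.
Qed.

Lemma trapped_forever (t : R) : 0 <= t -> trapped n y z y0 z0 t.
Proof.
  apply real_induction.
  - intros s Hs Hbefore. destruct (Req_dec s 0) as [->|Hs0].
    + unfold trapped. rewrite y_init, z_init, Rmult_0_r, exp_0, Rmult_1_r.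
      split; [apply in_D_margin, HD | lra].
    + apply trapped_closed; [lra | exact Hbefore].
  - intros s Hs Hupto. apply trapped_open; [exact Hs | apply Hupto; lra].
Qed.

End Invariance.

(** * Decay and global existence *)

Lemma is_lim_exp_decay (K c : R) : 0 < c -> is_lim (fun t => K * exp (- c * t)) p_infty 0.
Proof.
  intros Hc. replace (Finite 0) with (Rbar_mult K 0) by (simpl; rewrite Rmult_0_r; reflexivity).
  apply is_lim_scal_l.
  apply (is_lim_comp exp (fun t => - c * t) p_infty 0 m_infty); [exact is_lim_exp_m| |].
  - replace m_infty with (Rbar_mult (- c) p_infty).
    + apply is_lim_scal_l, is_lim_id.
    + simpl. destruct (Rle_dec 0 (- c)); [exfalso; lra | reflexivity].
  - exists 0. intros t _. discriminate.
Qed.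

Lemma is_lim_squeeze_exp (f : R -> R) (K c : R) : 0 < c ->
  (forall t, 1 < t -> 0 <= f t <= K * exp (- c * t)) -> is_lim f p_infty 0.
Proof.
  intros Hc Hf. apply (is_lim_le_le_loc (fun _ => 0) (fun t => K * exp (- c * t))).
  - exists 1. exact Hf.
  - apply is_lim_const.
  - apply is_lim_exp_decay, Hc.
Qed.

Lemma solution_trapped (n : nat) (y0 z0 : R) (y z : R -> R) : (2 <= n)%nat ->
  in_D n y0 z0 -> is_solution_on_pos n y z y0 z0 ->
  forall t, 0 <= t -> trapped n y z y0 z0 t.
Proof.
  intros hn HD [Hy0 [Hz0 [Ly [Lz Hd]]]].
  apply (trapped_forever n (fy n) (fz n) y z y0 z0 ltac:(lia)); try assumption.
  - intros u v _ _. split; reflexivity.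
  - apply at_right_right_continuous. rewrite Hy0. exact Ly.
  - apply at_right_right_continuous. rewrite Hz0. exact Lz.
  - intros t Ht. apply Hd, Ht.
  - intros t Ht. apply Hd, Ht.
Qed.

(* [V = y + z^2/3] satisfies [V' <= - c V], so [V e^(ct)] is nonincreasing. *)
Lemma solution_exp_bound (n : nat) (y0 z0 : R) (y z : R -> R) : (2 <= n)%nat ->
  in_D n y0 z0 -> is_solution_on_pos n y z y0 z0 ->
  exists K c, 0 < c /\ forall t, 1 < t -> y t + (1 / 3) * z t ^ 2 <= K * exp (- c * t).
Proof.
  intros hn HD Hsol. pose proof (solution_trapped n y0 z0 y z hn HD Hsol) as Htr.
  destruct Hsol as [_ [_ [_ [_ Hd]]]]. pose proof (INR_ge2 n hn).
  assert (Hy01 : y0 < 1) by apply HD.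
  set (c := (1 - y0) ^ 2 / (3 * (INR n + 1))).
  assert (Hc : 0 < c) by (unfold c; apply Rdiv_lt_0_compat; [apply pow_lt|]; lra).
  set (W := fun t => (y t + (1 / 3) * z t ^ 2) * exp (c * t)).
  assert (DW : forall t, 0 < t -> exists d, is_derive W t d /\ d <= 0).
  { intros t Ht. destruct (Hd t Ht) as [Dy Dz].
    pose proof (Htr t ltac:(lra)) as Htrt.
    destruct (trapped_box n y z y0 z0 t ltac:(lia) HD Htrt) as [By [Bz Hzy]].
    destruct Htrt as [Hm [Hyy0 _]].
    pose proof (lyapunov_decay n y0 (y t) (z t) hn Hy01 By Bz Hyy0 Hm Hzy) as Hly.
    fold c in Hly.
    exists ((fy n (y t) (z t) + (1 / 3) * (2 * z t * fz n (y t) (z t))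
             + c * (y t + (1 / 3) * z t ^ 2)) * exp (c * t)).
    split.
    - unfold W. auto_derive; change (fun x => y x) with y; change (fun x => z x) with z.
      + repeat split; eexists; eassumption.
      + rewrite (is_derive_unique _ _ _ Dy), (is_derive_unique _ _ _ Dz). ring.
    - apply Rmult_le_0_r; [lra | apply Rlt_le, exp_pos]. }
  exists (W 1), c; split; [exact Hc|]. intros t Ht.
  assert (HW : W t <= W 1).
  { apply ge_of_is_derive_nonpos; [exact Ht| |intros u Hu; apply DW; lra].
    destruct (DW 1 ltac:(lra)) as [d [Dd _]].
    apply continuous_right_continuous, (is_derive_continuous _ _ _ Dd). }
  unfold W at 1 in HW.
  replace (y t + 1 / 3 * z t ^ 2) with
    ((y t + 1 / 3 * z t ^ 2) * exp (c * t) * exp (- c * t)).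
  - apply Rmult_le_compat_r; [apply Rlt_le, exp_pos | exact HW].
  - rewrite Rmult_assoc, <- exp_plus. replace (c * t + - c * t) with 0 by ring.
    rewrite exp_0. ring.
Qed.

Lemma solution_converges (n : nat) (y0 z0 : R) (y z : R -> R) : (2 <= n)%nat ->
  in_D n y0 z0 -> is_solution_on_pos n y z y0 z0 ->
  is_lim y p_infty 0 /\ is_lim z p_infty 0.
Proof.
  intros hn HD Hsol.
  destruct (solution_exp_bound n y0 z0 y z hn HD Hsol) as [K [c [Hc HV]]].
  assert (Hbox : forall t, 1 < t -> 0 < y t < 1 /\ 0 < z t < 1 /\ z t ^ 2 <= y t).
  { intros t Ht. apply (trapped_box n y z y0 z0 t ltac:(lia) HD).
    apply (solution_trapped n y0 z0 y z hn HD Hsol). lra. }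
  split.
  - apply (is_lim_squeeze_exp y K c Hc). intros t Ht.
    destruct (Hbox t Ht) as [By [_ _]]. pose proof (HV t Ht). pose proof (pow2_ge_0 (z t)). lra.
  - apply (is_lim_squeeze_exp z (sqrt (3 * K)) (c / 2)); [lra|]. intros t Ht.
    destruct (Hbox t Ht) as [By [Bz Hzy]]. pose proof (HV t Ht).
    pose proof (exp_pos (- c * t)).
    assert (HK : 0 <= 3 * K).
    { enough (0 < K) by lra. apply (Rmult_lt_reg_r (exp (- c * t))); [assumption|].
      rewrite Rmult_0_l. pose proof (pow2_ge_0 (z t)). lra. }
    assert (Hsq : (sqrt (3 * K) * exp (- (c / 2) * t)) ^ 2 = 3 * K * exp (- c * t)).
    { rewrite Rpow_mult_distr, pow2_sqrt by exact HK.
      replace (- c * t) with (- (c / 2) * t + - (c / 2) * t) by field.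
      rewrite exp_plus. ring. }
    assert (0 <= sqrt (3 * K) * exp (- (c / 2) * t))
      by (apply Rmult_le_pos; [apply sqrt_pos | apply Rlt_le, exp_pos]).
    split; [lra|]. simpl in *. nra.
Qed.

Lemma solution_exists (n : nat) (y0 z0 : R) : (2 <= n)%nat -> in_D n y0 z0 ->
  exists y z : R -> R, is_solution_on_pos n y z y0 z0.
Proof.
  intros hn HD. pose proof (INR_ge2 n hn). set (L := 2 * INR n + 8).
  assert (HL : 0 < L) by (unfold L; lra).
  assert (Hfy0 : fy n 0 0 = 0) by (unfold fy; ring).
  assert (Hfz0 : fz n 0 0 = 0) by (unfold fz; ring).
  destruct (picard_existence (clamped (fy n)) (clamped (fz n)) (2 * L) L y0 z0 HL
              (clamped_bound _ L (Rlt_le _ _ HL) Hfy0 (fy_lipschitz_on_box n hn))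
              (clamped_bound _ L (Rlt_le _ _ HL) Hfz0 (fz_lipschitz_on_box n hn))
              (clamped_lipschitz _ L (Rlt_le _ _ HL) (fy_lipschitz_on_box n hn))
              (clamped_lipschitz _ L (Rlt_le _ _ HL) (fz_lipschitz_on_box n hn)))
    as [y [z [Hy0 [Hz0 [Cy [Cz Hd]]]]]].
  assert (Hbox : forall t, 0 <= t -> 0 < y t < 1 /\ 0 < z t < 1).
  { intros t Ht.
    assert (Htr : trapped n y z y0 z0 t).
    { apply (trapped_forever n (clamped (fy n)) (clamped (fz n)) y z y0 z0 ltac:(lia));
        try assumption.
      - intros u v Hu Hv. unfold clamped. rewrite !clamp_id by lra. split; reflexivity.
      - apply continuous_right_continuous, Cy.
      - apply continuous_right_continuous, Cz.
      - intros s Hs. apply Hd, Hs.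
      - intros s Hs. apply Hd, Hs. }
    destruct (trapped_box n y z y0 z0 t ltac:(lia) HD Htr) as [By [Bz _]]. split; assumption. }
  exists y, z. split; [|split; [|split; [|split]]]; try assumption.
  - rewrite <- Hy0. apply continuous_at_right, Cy.
  - rewrite <- Hz0. apply continuous_at_right, Cz.
  - intros t Ht. destruct (Hd t Ht) as [Dy Dz]. destruct (Hbox t ltac:(lra)) as [By Bz].
    unfold clamped in Dy, Dz. rewrite !clamp_id in Dy, Dz by lra. split; assumption.
Qed.

Theorem theorem3p5 (n : nat) (hn : (2 <= n)%nat) (y0 z0 : R) :
  in_D n y0 z0 ->
  (exists y z : R -> R, is_solution_on_pos n y z y0 z0) /\
  (forall y z : R -> R, is_solution_on_pos n y z y0 z0 ->
     is_lim y p_infty 0 /\ is_lim z p_infty 0).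
Proof.
  intros HD. split.
  - exact (solution_exists n y0 z0 hn HD).
  - intros y z Hsol. exact (solution_converges n y0 z0 y z hn HD Hsol).
Qed.
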